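(* Let $S=K[x_1,\ldots,x_n]$ be a polynomial ring over a field $K$, let $I\subseteq S$ be a squarefree monomial ideal all of whose minimal monomial generators have the same degree, let $x$ be one of the variables, and let $s$ be a positive integer. If $I^s$ has linear quotients, then $(I^x)^s$ has linear quotients.
   Context: A monomial ideal $J$ generated in a single degree, with minimal monomial generators $u_1,\ldots,u_r$, has linear quotients if there is an ordering $u_1>\cdots>u_r$ of these generators such that for each $1\le i<r$ the colon ideal $(u_1,\ldots,u_i):u_{i+1}$ is generated by a subset of the variables. Duplicate ideal: let $m_1,\ldots,m_q$ be all minimal monomial generators of $I$ divisible by $x$, and let $y$ be a new variable (adjoined to the ring) not dividing any generator of $I$. The duplicate ideal of $I$ by $x$ is $I^x=I+\big(\tfrac{m_1}{x}y,\ldots,\tfrac{m_q}{x}y\big)$; if $x$ divides no generator of $I$, then $I^x=I$. *)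

From mathcomp Require Import all_boot.
Set Implicit Arguments. Unset Strict Implicit. Unset Printing Implicit Defensive.

(* Monomials of S = K[x_0,...,x_{n-1}] are represented by exponent vectors.
   A monomial ideal is represented by a finite list of monomial generators. *)
Definition monom (n : nat) := {ffun 'I_n -> nat}.

Section Monomials.
Variable n : nat.

Definition mone : monom n := [ffun => 0%N].
Definition mvar (i : 'I_n) : monom n := [ffun j => nat_of_bool (j == i)].
Definition mmul (u v : monom n) : monom n := [ffun i => u i + v i].
Definition mdiv (u v : monom n) : monom n := [ffun i => u i - v i].
Definition mdvd (u v : monom n) : bool := [forall i, u i <= v i].
Definition mdeg (u : monom n) : nat := \sum_(i < n) u i.

Definition in_mideal (G : seq (monom n)) (w : monom n) : bool :=
  has (fun g => mdvd g w) G.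

Definition mingens (G : seq (monom n)) : seq (monom n) :=
  undup [seq g <- G | all (fun h => mdvd h g ==> mdvd g h) G].

Fixpoint mpow (G : seq (monom n)) (s : nat) : seq (monom n) :=
  if s is s'.+1 then [seq mmul a b | a <- G, b <- mpow G s'] else [:: mone].

(* the colon ideal (J : u) is generated by a subset V of the variables,
   i.e. a monomial w lies in (J : u) iff some variable of V divides w
   (monomial ideals are determined by the monomials they contain) *)
Definition colon_gen_by_vars (J : seq (monom n)) (u : monom n) : Prop :=
  exists V : {set 'I_n}, forall w : monom n,
    in_mideal J (mmul w u) = [exists i in V, 0 < w i].

Definition has_linear_quotients (J : seq (monom n)) : Prop :=
  exists L : seq (monom n),
    [/\ uniq L, mingens J =i L &
        forall k, 0 < k < size L -> colon_gen_by_vars (take k L) (nth mone L k)].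

Definition squarefree (G : seq (monom n)) : Prop :=
  forall g, g \in mingens G -> forall i, g i <= 1.

Definition equigenerated (G : seq (monom n)) : Prop :=
  exists d, forall g, g \in mingens G -> mdeg g = d.

End Monomials.

(* embedding of K[x_0..x_{n-1}] monomials into K[x_0..x_{n-1}, y], y = ord_max *)
Definition mlift (n : nat) (u : monom n) : monom n.+1 :=
  [ffun i : 'I_n.+1 => if unlift ord_max i is Some j then u j else 0%N].

Definition dup (n : nat) (G : seq (monom n)) (x : 'I_n) : seq (monom n.+1) :=
  [seq mlift g | g <- mingens G] ++
  [seq mmul (mlift (mdiv g (mvar x))) (mvar ord_max) | g <- filter (fun g : monom n => 0 < g x) (mingens G)].

From mathcomp Require Import all_boot zify.
Set Implicit Arguments. Unset Strict Implicit. Unset Printing Implicit Defensive.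

(* The minimal generators of (I^x)^s are the monomials u x^-k y^k with u a
   minimal generator of I^s and 0 <= k <= deg_x u; squarefreeness of I is what
   makes every such k attainable.  Given a linear quotient order of I^s, replace
   each u by the block u, u x^-1 y, ..., u x^-a y^a (a = deg_x u).  If the colon
   of the earlier generators of I^s by u is generated by the variables V, then
   the colon at u x^-k y^k is generated by V, by x when k > 0, and by y when
   x is in V: substituting y := x sends the earlier blocks into the earlier
   generators of I^s, and x in V means, since all generators have the same
   degree, that some earlier generator is u x / x_j, whose block contains a
   divisor of y u x^-k y^k. *)

Lemma cat_eq_cat_cons (T : Type) (X Y A B : seq T) (p : T) :
  X ++ Y = A ++ p :: B ->
  (exists B', X = A ++ p :: B') \/ (exists2 C, Y = C ++ p :: B & A = X ++ C).
Proof.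
elim: X A => [|y X IH] [|a A] /=.
- by move=> E; right; exists [::].
- by move=> E; right; exists (a :: A).
- by case=> -> _; left; exists X.
- by case=> -> /IH[[B' ->]|[C -> ->]]; [left; exists B' | right; exists C].
Qed.

Lemma map_iota0_eq_cat_cons (T : Type) (f : nat -> T) m C p B :
  map f (iota 0 m) = C ++ p :: B ->
  exists k, [/\ k < m, C = map f (iota 0 k) & p = f k].
Proof.
move=> E; have lt_Cm : size C < m.
  move/(congr1 size): E; rewrite size_map size_iota size_cat /= => ->.
  by rewrite addnS ltnS leq_addr.
exists (size C); split=> //.
  move/(congr1 (take (size C))): E; rewrite take_size_cat // -map_take take_iota.
  by rewrite (minn_idPl (ltnW lt_Cm)).
move/(congr1 (nth (f 0) ^~ (size C))): E.
by rewrite nth_cat ltnn subnn (nth_map 0) ?size_iota // nth_iota.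
Qed.

Section Monomials.
Variable n : nat.
Implicit Types (a b c d u w : monom n) (G H J L : seq (monom n)).

Lemma mmulE a b i : mmul a b i = a i + b i.
Proof. by rewrite ffunE. Qed.

Lemma mvarE (z i : 'I_n) : mvar z i = (i == z).
Proof. by rewrite ffunE. Qed.

Lemma mdvdP a b : reflect (forall i, a i <= b i) (mdvd a b).
Proof. exact: forallP. Qed.

Lemma mdvd_refl a : mdvd a a.
Proof. by apply/mdvdP. Qed.

Lemma mdvd_trans a b c : mdvd a b -> mdvd b c -> mdvd a c.
Proof. by move=> /mdvdP ab /mdvdP bc; apply/mdvdP => i; apply: leq_trans (ab i) (bc i). Qed.

Lemma mdvd_anti a b : mdvd a b -> mdvd b a -> a = b.
Proof. by move=> /mdvdP ab /mdvdP ba; apply/ffunP => i; apply/eqP; rewrite eqn_leq ab ba. Qed.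

Lemma mdvd_mmul a b c d : mdvd a b -> mdvd c d -> mdvd (mmul a c) (mmul b d).
Proof. by move=> /mdvdP ab /mdvdP cd; apply/mdvdP => i; rewrite !mmulE leq_add. Qed.

Lemma mdvd_mvar_mul (z : 'I_n) a b :
  mdvd a (mmul (mvar z) b) -> a z <= b z -> mdvd a b.
Proof.
move=> /mdvdP a_zb az_le; apply/mdvdP => i.
by case: (eqVneq i z) => [-> //|ne_iz]; have := a_zb i; rewrite mmulE mvarE (negbTE ne_iz).
Qed.

Lemma mdeg_mmul a b : mdeg (mmul a b) = mdeg a + mdeg b.
Proof. by rewrite /mdeg -big_split; apply: eq_bigr => i _; rewrite mmulE. Qed.

Lemma mdeg_mone : mdeg (mone n) = 0.
Proof. by rewrite /mdeg big1 // => i _; rewrite ffunE. Qed.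

Lemma mdvd_eq_deg a b : mdvd a b -> mdeg a = mdeg b -> a = b.
Proof.
move=> /mdvdP ab deg_ab.
have b_eq : b = mmul a (mdiv b a) by apply/ffunP => i; rewrite !ffunE subnKC.
have : mdeg (mdiv b a) == 0.
  by move/eqP: deg_ab; rewrite [X in _ == mdeg X]b_eq mdeg_mmul -{1}[mdeg a]addn0 eqn_add2l eq_sym.
rewrite /mdeg sum_nat_eq0 => /forallP quot0.
by apply/ffunP => i; move: (quot0 i) (ab i); rewrite ffunE /=; lia.
Qed.

Lemma mdvd_lt_deg a b : mdvd a b -> ~~ mdvd b a -> mdeg a < mdeg b.
Proof.
move=> ab nba; rewrite ltn_neqAle leq_sum ?andbT => [|i _]; last exact/mdvdP.
by apply: contra nba => /eqP deg_ab; rewrite (mdvd_eq_deg ab deg_ab) mdvd_refl.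
Qed.

Lemma in_midealP J w : reflect (exists2 g : monom n, g \in J & mdvd g w) (in_mideal J w).
Proof. exact: hasP. Qed.

Lemma in_mideal_cat J J' w : in_mideal (J ++ J') w = in_mideal J w || in_mideal J' w.
Proof. exact: has_cat. Qed.

Lemma in_mideal_mdvd J a b : in_mideal J a -> mdvd a b -> in_mideal J b.
Proof.
by move=> /in_midealP[g gJ ga] ab; apply/in_midealP; exists g => //; apply: mdvd_trans ab.
Qed.

Lemma colon_gen_by_varsI J u (V : {set 'I_n}) :
  (forall i, i \in V -> in_mideal J (mmul (mvar i) u)) ->
  (forall w, in_mideal J (mmul w u) -> exists2 i, i \in V & 0 < w i) ->
  colon_gen_by_vars J u.
Proof.
move=> varsV colonV; exists V => w.
apply/idP/existsP => [/colonV[i iV wi_gt0]|[i /andP[iV wi_gt0]]].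
  by exists i; rewrite iV.
apply: in_mideal_mdvd (varsV i iV) (mdvd_mmul _ (mdvd_refl u)).
by apply/mdvdP => j; rewrite mvarE; case: eqP => // ->.
Qed.

Lemma colon_gen_by_vars_nil u : colon_gen_by_vars [::] u.
Proof. by exists set0 => w; apply/esym/existsP => -[i]; rewrite inE. Qed.

Lemma mem_mingens G g :
  (g \in mingens G) = (g \in G) && all (fun h => mdvd h g ==> mdvd g h) G.
Proof. by rewrite /mingens mem_undup mem_filter andbC. Qed.

Lemma mingens_sub G : {subset mingens G <= G}.
Proof. by move=> g; rewrite mem_mingens => /andP[]. Qed.

Lemma mingens_mdvd G g : g \in G -> exists2 m, m \in mingens G & mdvd m g.
Proof.
elim: {g}(mdeg g).+1 {-2}g (ltnSn (mdeg g)) => // k IH g deg_g gG.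
have [minimal | ] := boolP (all (fun h => mdvd h g ==> mdvd g h) G).
  by exists g; rewrite ?mem_mingens ?gG ?mdvd_refl.
rewrite -has_predC => /hasP[h hG /=]; rewrite negb_imply => /andP[hg ngh].
have [m mM mh] := IH h (leq_trans (mdvd_lt_deg hg ngh) deg_g) hG.
by exists m => //; apply: mdvd_trans mh hg.
Qed.

Lemma mingens_equideg G (k : nat) : {in G, forall g, mdeg g = k} -> mingens G =i G.
Proof.
move=> degG g; rewrite mem_mingens; have [gG|] //= := boolP (g \in G).
by apply/allP => h hG; apply/implyP => hg; rewrite (mdvd_eq_deg hg) ?mdvd_refl ?degG.
Qed.

Lemma mem_mpowS G s p :
  p \in mpow G s.+1 -> exists (a q : monom n), [/\ a \in G, q \in mpow G s & p = mmul a q].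
Proof. by move=> /allpairsP[[a q] /= [aG qG ->]]; exists a, q. Qed.

Lemma mpow_mmul G s a q : a \in G -> q \in mpow G s -> mmul a q \in mpow G s.+1.
Proof. by move=> aG qG; apply/allpairsP; exists (a, q). Qed.

Lemma mpow_deg G s (k : nat) : {in G, forall g, mdeg g = k} ->
  {in mpow G s, forall p, mdeg p = s * k}.
Proof.
move=> degG; elim: s => [|s IH] p.
  by rewrite inE => /eqP ->; rewrite mdeg_mone.
by move=> /mem_mpowS[a [q [aG qG ->]]]; rewrite mdeg_mmul degG // IH // mulSn.
Qed.

Lemma mpow_sub G H s : {subset G <= H} -> {subset mpow G s <= mpow H s}.
Proof.
move=> GH; elim: s => [|s IH] p // /mem_mpowS[a [q [aG qG ->]]].
by apply: mpow_mmul; [apply: GH | apply: IH].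
Qed.

Lemma mpow_mingens_mdvd G s p :
  p \in mpow G s -> exists2 p', p' \in mpow (mingens G) s & mdvd p' p.
Proof.
elim: s p => [|s IH] p; first by exists p; rewrite ?mdvd_refl.
move=> /mem_mpowS[a [q [aG qG ->]]].
have [m mM ma] := mingens_mdvd aG; have [q' q'M q'q] := IH q qG.
by exists (mmul m q'); [apply: mpow_mmul | apply: mdvd_mmul].
Qed.

Lemma mingens_mpow G s (k : nat) : {in mingens G, forall g, mdeg g = k} ->
  mingens (mpow G s) =i mpow (mingens G) s.
Proof.
move=> degM p; have sub_pow := mpow_sub (s := s) (@mingens_sub G).
apply/idP/idP => [pM | pM].
  have [p' p'M p'p] := mpow_mingens_mdvd (mingens_sub pM).
  move: pM; rewrite mem_mingens => /andP[_ /allP/(_ p' (sub_pow _ p'M))].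
  by rewrite p'p => /(mdvd_anti p'p) <-.
rewrite mem_mingens sub_pow //=; apply/allP => h hG; apply/implyP => hp.
have [h' h'M h'h] := mpow_mingens_mdvd hG.
suff <- : h' = p by [].
by apply: mdvd_eq_deg (mdvd_trans h'h hp) _; rewrite !(mpow_deg (s := s) degM).
Qed.

Definition lq_order L :=
  forall A p B, L = A ++ p :: B -> 0 < size A -> colon_gen_by_vars A p.

Lemma lq_orderP L :
  (forall k, 0 < k < size L -> colon_gen_by_vars (take k L) (nth (mone n) L k)) <->
  lq_order L.
Proof.
split=> [colonL A p B EL A_gt0 | lqL k /andP[k_gt0 lt_kL]].
  have := colonL (size A); rewrite EL take_size_cat // nth_cat ltnn subnn; apply.
  by rewrite A_gt0 size_cat addnS ltnS leq_addr.
apply: (lqL _ _ (drop k.+1 L)); first by rewrite -drop_nth // cat_take_drop.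
by rewrite size_takel // ltnW.
Qed.

Lemma lq_order_catl L L' : lq_order (L ++ L') -> lq_order L.
Proof. by move=> lqL A p B EL; apply: (lqL A p (B ++ L')); rewrite EL -catA. Qed.

Lemma lq_order_rcons_colon L u : lq_order (rcons L u) -> colon_gen_by_vars L u.
Proof.
case: L => [|g L] lqL; first exact: colon_gen_by_vars_nil.
by apply: lqL (_ : _ = _ ++ u :: [::]) _; rewrite ?cats1.
Qed.

End Monomials.

Section Duplication.
Variables (n : nat) (x : 'I_n).
Implicit Types (a b g u : monom n) (w : monom n.+1) (G L : seq (monom n)).

Local Notation y := (@ord_max n).

(* [xtoy u k] is u x^-k y^k; it is only meaningful for k <= u x. *)
Definition xtoy u (k : nat) : monom n.+1 :=
  [ffun i => if unlift y i is Some j then (if j == x then u j - k else u j) else k].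

Definition ytox w : monom n := [ffun i => w (lift y i) + (i == x) * w y].

Lemma xtoy_lift u k j : xtoy u k (lift y j) = if j == x then u j - k else u j.
Proof. by rewrite ffunE liftK. Qed.

Lemma xtoy_max u k : xtoy u k y = k.
Proof. by rewrite ffunE unlift_none. Qed.

Lemma ytoxE w i : ytox w i = w (lift y i) + (i == x) * w y.
Proof. by rewrite ffunE. Qed.

Lemma ytox_mmul w w' : ytox (mmul w w') = mmul (ytox w) (ytox w').
Proof. by apply/ffunP => i; rewrite !ffunE mulnDr addnACA. Qed.

Lemma ytox_mdvd w w' : mdvd w w' -> mdvd (ytox w) (ytox w').
Proof. by move=> /mdvdP ww'; apply/mdvdP => i; rewrite !ytoxE leq_add ?leq_mul. Qed.

Lemma xtoyK u k : k <= u x -> ytox (xtoy u k) = u.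
Proof.
move=> k_le; apply/ffunP => i; rewrite ytoxE xtoy_lift xtoy_max.
by case: eqP => [->|_]; rewrite ?mul1n ?mul0n ?subnK ?addn0.
Qed.

Lemma mdeg_ytox w : mdeg (ytox w) = mdeg w.
Proof.
have lift_widen j : widen_ord (leqnSn n) j = lift y j.
  by apply: val_inj; rewrite /= /bump leqNgt ltn_ord.
rewrite /mdeg big_ord_recr /=; under eq_bigr => i _ do rewrite ytoxE.
rewrite big_split /=; congr (_ + _).
  by apply: eq_bigr => j _; rewrite lift_widen.
by rewrite (bigD1 x) //= eqxx mul1n big1 ?addn0 // => j /negbTE ->.
Qed.

Lemma mdeg_xtoy u k : k <= u x -> mdeg (xtoy u k) = mdeg u.
Proof. by move=> k_le; rewrite -mdeg_ytox xtoyK. Qed.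

Lemma xtoy_inj u u' k k' : k <= u x -> k' <= u' x ->
  xtoy u k = xtoy u' k' -> u = u' /\ k = k'.
Proof.
move=> k_le k'_le E; split; first by rewrite -(xtoyK k_le) -(xtoyK k'_le) E.
by rewrite -(xtoy_max u k) -(xtoy_max u' k') E.
Qed.

Lemma xtoy_mmul g u c k : c <= g x -> k <= u x ->
  mmul (xtoy g c) (xtoy u k) = xtoy (mmul g u) (c + k).
Proof.
move=> c_le k_le; apply/ffunP => i; rewrite !ffunE.
by case: (unliftP y i) => [j _|_] //; rewrite ffunE; case: eqP => [->|] //; lia.
Qed.

Lemma mdvd_xtoy a b j k : mdvd a b -> j <= k -> a x - j <= b x - k ->
  mdvd (xtoy a j) (xtoy b k).
Proof.
move=> /mdvdP ab jk ajbk; apply/mdvdP => i; rewrite !ffunE.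
by case: (unliftP y i) => [l _|_] //; case: eqP => [->|].
Qed.

Lemma mvar_lift_xtoy z : mvar (lift y z) = xtoy (mvar z) 0.
Proof.
apply/ffunP => i; rewrite !ffunE; case: (unliftP y i) => [j ->|->].
  by rewrite (inj_eq (@lift_inj _ _)) ffunE; case: (j == x); rewrite ?subn0.
by rewrite (negbTE (neq_lift _ _)).
Qed.

Lemma mvar_max_xtoy : mvar y = xtoy (mvar x) 1.
Proof.
apply/ffunP => i; rewrite !ffunE; case: (unliftP y i) => [j ->|->]; last by rewrite eqxx.
have /negbTE -> : lift y j != y by rewrite eq_sym neq_lift.
by rewrite ffunE; case: eqP.
Qed.

Lemma mlift_xtoy g : mlift g = xtoy g 0.
Proof.
apply/ffunP => i; rewrite !ffunE; case: (unliftP y i) => [j _|_] //.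
by case: eqP; rewrite ?subn0.
Qed.

Lemma mlift_mvar_xtoy g : mmul (mlift (mdiv g (mvar x))) (mvar y) = xtoy g 1.
Proof.
apply/ffunP => i; rewrite !ffunE; case: (unliftP y i) => [j ->|->]; last by rewrite eqxx.
have /negbTE -> : lift y j != y by rewrite eq_sym neq_lift.
by rewrite !ffunE addn0; case: eqP; rewrite ?subn0.
Qed.

Lemma mem_dup G w : w \in dup G x ->
  exists g c, [/\ g \in mingens G, c <= 1, c <= g x & w = xtoy g c].
Proof.
rewrite mem_cat => /orP[/mapP[g gM ->]|/mapP[g]].
  by exists g, 0; rewrite mlift_xtoy.
by rewrite mem_filter => /andP[gx gM] ->; exists g, 1; rewrite mlift_mvar_xtoy.
Qed.

Lemma xtoy_mem_dup G g c : g \in mingens G -> c <= 1 -> c <= g x -> xtoy g c \in dup G x.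
Proof.
move=> gM; rewrite mem_cat; case: c => [|[|//]] _ g_x.
  by apply/orP; left; apply/mapP; exists g; rewrite ?mlift_xtoy.
apply/orP; right; apply/mapP; exists g; last by rewrite mlift_mvar_xtoy.
by rewrite mem_filter gM andbT.
Qed.

Lemma xtoy_mone : xtoy (mone n) 0 = mone n.+1.
Proof.
by rewrite -mlift_xtoy; apply/ffunP => i; rewrite !ffunE; case: unlift => // j; rewrite ffunE.
Qed.

Lemma mem_mpow_dup G s w : squarefree G ->
  w \in mpow (dup G x) s <->
  exists u k, [/\ u \in mpow (mingens G) s, k <= u x & w = xtoy u k].
Proof.
move=> sqfG; elim: s w => [|s IH] w.
  rewrite inE; split => [/eqP ->|[u [k [+ k_le ->]]]].
    by exists (mone n), 0; rewrite inE eqxx xtoy_mone ffunE.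
  by rewrite inE => /eqP u1; move: k_le; rewrite u1 ffunE leqn0 => /eqP ->; rewrite xtoy_mone.
split => [/mem_mpowS[a [q [aD qD ->]]] | [u [k [/mem_mpowS[g [u' [gM u'M ->]]] k_le ->]]]].
  have [g [c [gM _ c_le ->]]] := mem_dup aD.
  have [u [k [uM k_le ->]]] := (IH q).1 qD.
  exists (mmul g u), (c + k); split; first exact: mpow_mmul.
    by rewrite mmulE leq_add.
  exact: xtoy_mmul.
have g_x1 : g x <= 1 := sqfG g gM x; move: k_le; rewrite mmulE => k_le.
have [c [k' [-> c_le1 c_le k'_le]]] :
    exists c k', [/\ k = c + k', c <= 1, c <= g x & k' <= u' x].
  by exists (k - u' x), (k - (k - u' x)); split; lia.
rewrite -xtoy_mmul //; apply: mpow_mmul; first exact: xtoy_mem_dup.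
by apply/IH; exists u', k'.
Qed.

Definition xtoy_seq u := [seq xtoy u k | k <- iota 0 (u x).+1].

Definition dup_order L := flatten (map xtoy_seq L).

Lemma dup_order_rcons L u : dup_order (rcons L u) = dup_order L ++ xtoy_seq u.
Proof. by rewrite /dup_order map_rcons -cats1 flatten_cat /= cats0. Qed.

Lemma dup_orderP L w :
  reflect (exists u k, [/\ u \in L, k <= u x & w = xtoy u k]) (w \in dup_order L).
Proof.
apply: (iffP flatten_mapP) => [[u uL /mapP[k]]|[u [k [uL k_le ->]]]].
  by rewrite mem_iota add0n ltnS => k_le ->; exists u, k.
by exists u => //; apply/mapP; exists k; rewrite // mem_iota add0n ltnS.
Qed.

Lemma uniq_dup_order L : uniq L -> uniq (dup_order L).
Proof.
elim: L => [|u L IH] // /andP[uL uniqL].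
change (uniq (xtoy_seq u ++ dup_order L)); rewrite cat_uniq IH // andbT.
apply/andP; split.
  rewrite map_inj_in_uniq ?iota_uniq // => k k'.
  rewrite !mem_iota !add0n !ltnS => k_le k'_le.
  by move=> /(xtoy_inj k_le k'_le)[].
apply/hasP => -[w /dup_orderP[u' [k' [u'L k'_le ->]]] /mapP[k]].
rewrite mem_iota add0n ltnS => k_le /(xtoy_inj k'_le k_le)[u'u _].
by move: uL; rewrite -u'u u'L.
Qed.

Definition dup_vars (V : {set 'I_n}) k : {set 'I_n.+1} :=
  [set i | if unlift y i is Some j then (j \in V) || (j == x) && (0 < k) else x \in V].

Lemma dup_vars_lift V k z : (lift y z \in dup_vars V k) = (z \in V) || (z == x) && (0 < k).
Proof. by rewrite inE liftK. Qed.

Lemma dup_vars_max V k : (y \in dup_vars V k) = (x \in V).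
Proof. by rewrite inE unlift_none. Qed.

Section ColonStep.
Variables (L : seq (monom n)) (u : monom n) (k : nat) (V : {set 'I_n}).
Hypothesis k_le : k <= u x.
Hypothesis colonV : forall w : monom n, in_mideal L (mmul w u) = [exists i in V, 0 < w i].

Local Notation prefix := [seq xtoy u j | j <- iota 0 k].

Lemma dup_colon_sound w :
  in_mideal (dup_order L ++ prefix) (mmul w (xtoy u k)) ->
  exists2 i, i \in dup_vars V k & 0 < w i.
Proof.
rewrite in_mideal_cat => /orP[|/in_midealP[d /mapP[j]]].
  move=> /in_midealP[d /dup_orderP[g [j [gL j_le ->]]] g_dvd].
  have : in_mideal L (mmul (ytox w) u).
    apply/in_midealP; exists g => //.
    by rewrite -(xtoyK j_le) -[X in mmul _ X](xtoyK k_le) -ytox_mmul ytox_mdvd.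
  rewrite colonV => /existsP[i /andP[iV]]; rewrite ytoxE.
  have [eq_ix | ne_ix] := eqVneq i x; last first.
    by rewrite mul0n addn0 => w_gt0; exists (lift y i); rewrite ?dup_vars_lift ?iV.
  subst i; rewrite mul1n; have [-> | wx_gt0 _] := posnP (w (lift y x)).
    by rewrite add0n => wy_gt0; exists y; rewrite ?dup_vars_max.
  by exists (lift y x); rewrite ?dup_vars_lift ?iV.
rewrite mem_iota add0n => /= j_lt -> /mdvdP /(_ (lift y x)).
rewrite mmulE !xtoy_lift eqxx => wx_gt0.
by exists (lift y x); rewrite ?dup_vars_lift ?eqxx ?orbT /=; lia.
Qed.

Lemma dup_colon_lift z : z \in V ->
  in_mideal (dup_order L) (mmul (mvar (lift y z)) (xtoy u k)).
Proof.
move=> zV; have /in_midealP[g gL g_dvd] : in_mideal L (mmul (mvar z) u).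
  by rewrite colonV; apply/existsP; exists z; rewrite zV mvarE eqxx.
rewrite mvar_lift_xtoy xtoy_mmul // add0n.
apply/in_midealP; exists (xtoy g (minn k (g x))).
  by apply/dup_orderP; exists g, (minn k (g x)); rewrite geq_minr.
have /mdvdP/(_ x) := g_dvd; rewrite mmulE => gx_le.
by apply: mdvd_xtoy g_dvd (geq_minl _ _) _; rewrite mmulE; lia.
Qed.

Lemma dup_colon_x : 0 < k -> in_mideal prefix (mmul (mvar (lift y x)) (xtoy u k)).
Proof.
move=> k_gt0; rewrite mvar_lift_xtoy xtoy_mmul // add0n.
apply/in_midealP; exists (xtoy u k.-1).
  by apply/mapP; exists k.-1; rewrite // mem_iota add0n ltn_predL.
apply: mdvd_xtoy (leq_pred _) _; first by apply/mdvdP => i; rewrite mmulE leq_addl.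
by rewrite mmulE mvarE eqxx; lia.
Qed.

Lemma dup_colon_y : {in L, forall g, mdeg g = mdeg u} -> u \notin L -> x \in V ->
  in_mideal (dup_order L) (mmul (mvar y) (xtoy u k)).
Proof.
move=> degL uL xV; have /in_midealP[g gL g_dvd] : in_mideal L (mmul (mvar x) u).
  by rewrite colonV; apply/existsP; exists x; rewrite xV mvarE eqxx.
have ux_lt : u x < g x.
  rewrite ltnNge; apply: contraNN uL => gx_le.
  by rewrite -(mdvd_eq_deg (mdvd_mvar_mul g_dvd gx_le) (degL g gL)).
rewrite mvar_max_xtoy xtoy_mmul ?mvarE ?eqxx // add1n.
apply/in_midealP; exists (xtoy g k.+1).
  by apply/dup_orderP; exists g, k.+1; split=> //; apply: leq_ltn_trans ux_lt.
have /mdvdP/(_ x) := g_dvd; rewrite mmulE mvarE eqxx => gx_le.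
by apply: mdvd_xtoy g_dvd (leqnn _) _; rewrite mmulE mvarE eqxx; lia.
Qed.

Lemma colon_dup_order : {in L, forall g, mdeg g = mdeg u} -> u \notin L ->
  colon_gen_by_vars (dup_order L ++ prefix) (xtoy u k).
Proof.
move=> degL uL; apply: (colon_gen_by_varsI (V := dup_vars V k)); last exact: dup_colon_sound.
move=> i; rewrite in_mideal_cat; case: (unliftP y i) => [z ->|->]; last first.
  by rewrite dup_vars_max => xV; rewrite dup_colon_y.
rewrite dup_vars_lift => /orP[zV|/andP[/eqP -> k_gt0]]; first by rewrite dup_colon_lift.
by rewrite dup_colon_x ?orbT.
Qed.

End ColonStep.

Lemma mingens_mpow_dup G s L (d : nat) :
  squarefree G -> {in mingens G, forall g, mdeg g = d} ->
  L =i mpow (mingens G) s -> mingens (mpow (dup G x) s) =i dup_order L.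
Proof.
move=> sqfG degG memL.
have degD : {in mpow (dup G x) s, forall w, mdeg w = s * d}.
  move=> w /(mem_mpow_dup _ _ sqfG)[u [k [uM k_le ->]]].
  by rewrite mdeg_xtoy // (mpow_deg degG uM).
move=> w; rewrite (mingens_equideg degD).
apply/idP/dup_orderP => [/(mem_mpow_dup _ _ sqfG)[u [k [uM k_le ->]]] | [u [k [uL k_le ->]]]].
  by exists u, k; rewrite memL.
by apply/mem_mpow_dup => //; exists u, k; rewrite -memL.
Qed.

Lemma lq_order_dup_order L (d : nat) : uniq L -> {in L, forall u, mdeg u = d} ->
  lq_order L -> lq_order (dup_order L).
Proof.
elim/last_ind: L => [|L u IH]; first by move=> _ _ _ A p B; case: A.
rewrite rcons_uniq => /andP[uL uniqL] degLu lqLu.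
have degL : {in L, forall g, mdeg g = d}.
  by move=> g gL; apply: degLu; rewrite mem_rcons inE gL orbT.
rewrite dup_order_rcons => A p B E A_gt0.
have [[B' EA]|[C EC EA]] := cat_eq_cat_cons E; last rewrite {}EA.
  apply: (IH uniqL degL _ _ _ _ EA A_gt0).
  by apply: (@lq_order_catl _ _ [:: u]); rewrite cats1.
have [k [lt_k -> ->]] := map_iota0_eq_cat_cons EC.
have [V colonV] := lq_order_rcons_colon lqLu.
apply: (colon_dup_order lt_k colonV) uL => g gL.
by rewrite degL ?degLu // mem_rcons mem_head.
Qed.

End Duplication.

Theorem proposition2p3 (n : nat) (G : seq (monom n)) (x : 'I_n) (s : nat) :
  0 < s -> squarefree G -> equigenerated G ->
  has_linear_quotients (mpow G s) ->
  has_linear_quotients (mpow (dup G x) s).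
Proof.
(* For s = 0 both powers are the unit ideal. *)
move=> _ sqfG [d degG] [L [uniqL genL lqL]].
have memL : L =i mpow (mingens G) s by move=> u; rewrite -genL (mingens_mpow _ degG).
have degL : {in L, forall u, mdeg u = s * d} by move=> u; rewrite memL; apply: mpow_deg.
exists (dup_order x L); split; first exact: uniq_dup_order.
  exact: mingens_mpow_dup sqfG degG memL.
by apply/lq_orderP/(lq_order_dup_order uniqL degL)/lq_orderP.
Qed.
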